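(* Let $\Pi = (\mathcal{A}, \mathcal{E}, \mathcal{R})$ be an epistemic logic program with SE-function $\mathcal{SE}_\Pi$, let $\mathcal{M}$ be a set of interpretations over $\mathcal{A}$, and let $\Phi \subseteq \mathcal{E}$ be a guess. Then $\mathcal{M}$ is a candidate world view of $\Pi$ w.r.t. $\Phi$ (i.e. $\mathcal{M}=AS(\Pi^\Phi)$ and $\mathcal{M}$ is $\Phi$-compatible w.r.t. $\mathcal{E}$) if and only if $\mathcal{M} = \{ Y \mid (Y, Y) \in \mathcal{SE}_\Pi(\Phi) \text{ and there is no } X \subset Y \text{ with } (X, Y) \in \mathcal{SE}_\Pi(\Phi) \}$ and $\mathcal{M}$ is $\Phi$-compatible w.r.t. $\mathcal{E}$.
   Context: A literal over a set of atoms $\mathcal{A}$ is an atom $a$ or $\neg a$. An interpretation is $I\subseteq\mathcal{A}$; $I\models a$ iff $a\in I$, $I\models\neg\ell$ iff $I\not\models\ell$. A (plain) logic program $(\mathcal{A},\mathcal{R})$ has rules $a_1\vee\cdots\vee a_l \leftarrow a_{l+1},\ldots,a_m,\neg\ell_1,\ldots,\neg\ell_n$ ($\ell_i$ literals); $H(r)$ head, $B(r)$ body, $B^+(r)=\{a_{l+1},\ldots,a_m\}$; $M\models r$ iff $M\models B(r)$ implies $M\cap H(r)\neq\emptyset$; $\mathrm{Mods}(\Pi)$ is the set of models. GL-reduct: $\Pi^I=(\mathcal{A},\{H(r)\leftarrow B^+(r)\mid r\in\mathcal{R},\ I\models\neg\ell\ \forall\neg\ell\in B(r)\})$. Answer set: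 model $M$ of $\Pi$ such that no $M'\subset M$ is a model of $\Pi^M$; $AS(\Pi)$ the set of answer sets ($\neg\neg\neg a$ treated as $\neg a$). An SE-model of $\Pi$ is a pair $(X,Y)$ with $X\subseteq Y\subseteq\mathcal{A}$, $Y\models\Pi$ and $X\models\Pi^Y$; $\mathrm{SE}(\Pi)$ is the set of SE-models. An ELP is $(\mathcal{A},\mathcal{E},\mathcal{R})$ with $\mathcal{E}$ a set of epistemic literals $\mathbf{not}\,\ell$ and rules $a_1\vee\cdots\vee a_k\leftarrow \ell_1,\ldots,\ell_m,\xi_1,\ldots,\xi_j,\neg\xi_{j+1},\ldots,\neg\xi_n$, $\xi_i\in\mathcal{E}$. A guess is $\Phi\subseteq\mathcal{E}$; a set $\mathcal{I}$ of interpretations is $\Phi$-compatible w.r.t. $\mathcal{E}$ iff $\mathcal{I}\neq\emptyset$, every $\mathbf{not}\,\ell\in\Phi$ has some $I\in\mathcal{I}$ with $I\not\models\ell$, and every $\mathbf{not}\,\ell\in\mathcal{E}\setminus\Phi$ has $I\models\ell$ for all $I\in\mathcal{I}$. The epistemic reduct $\Pi^\Phi=(\mathcal{A},\mathcal{R}^\Phi)$ replaces each $\mathbf{not}\,\ell\in\Phi$ by $\top$ and every other $\mathbf{not}$ by $\neg$. $\Phi$ is realizable in a set $\mathcal{I}$ of interpretations iff some subset of $\mathcal{I}$ is $\Phi$-compatible w.r.t. $\mathcal{E}$; $\Phi$ is realizable in $\Pi$ iff it is realizable in $\mathrm{Mods}(\Pi^\Phi)$. The SE-function of $\Pi$ maps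 each guess $\Phi\subseteq\mathcal{E}$ to $\mathcal{SE}_\Pi(\Phi)=\mathrm{SE}(\Pi^\Phi)$ if $\Phi$ is realizable in $\Pi$, and to $\emptyset$ otherwise. *)

From mathcomp Require Import all_boot.
Set Implicit Arguments. Unset Strict Implicit. Unset Printing Implicit Defensive.

Section Programs.
Variable A : finType.  (* the (finite) set of atoms *)

Definition interp := {set A}.

(* Body elements of plain rules: atoms, (nested) default negations, and the
   constant ⊤ (needed because the epistemic reduct produces ⊤ and ¬⊤). *)
Inductive blit : Type :=
| BAtom of A
| BNot of blit
| BTop.

Fixpoint bsat (I : interp) (b : blit) : bool :=
  match b with
  | BAtom a => a \in I
  | BNot b' => ~~ bsat I b'
  | BTop => true
  end.

(* plain rule  a_1 v ... v a_l <- body *)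
Record rule := Rule { rhead : seq A; rbody : seq blit }.
Definition program := seq rule.

Definition sat_rule (M : interp) (r : rule) : bool :=
  all (bsat M) (rbody r) ==> has (fun a => a \in M) (rhead r).

Definition mods (P : program) : {set interp} :=
  [set M : interp | all (sat_rule M) P].

Definition is_neg (b : blit) : bool := if b is BNot _ then true else false.

Definition bpos (r : rule) : seq blit :=
  [seq b <- rbody r | if b is BAtom _ then true else false].

Definition gl_reduct (P : program) (I : interp) : program :=
  [seq Rule (rhead r) (bpos r) |
     r <- P & all (fun b => is_neg b ==> bsat I b) (rbody r)].

Definition answer_sets (P : program) : {set interp} :=
  [set M in mods P |
     ~~ [exists M' : interp, (M' \proper M) && (M' \in mods (gl_reduct P M))]].

Definition se_models (P : program) : {set interp * interp} :=
  [set XY : interp * interp |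
     [&& XY.1 \subset XY.2, XY.2 \in mods P & XY.1 \in mods (gl_reduct P XY.2)]].

(* Literals: (true, a) is a, (false, a) is ¬a.  An epistemic literal
   "not l" is represented by its literal l. *)
Definition lit := (bool * A)%type.
Definition lit_blit (l : lit) : blit := if l.1 then BAtom l.2 else BNot (BAtom l.2).
Definition lsat (I : interp) (l : lit) : bool := bsat I (lit_blit l).

(* ELP rule  a_1 v..v a_k <- l_1..l_m, xi_1..xi_j, ¬xi_(j+1)..¬xi_n *)
Record erule := ERule {
  ehead : seq A;
  elits : seq lit;
  eep : seq lit;
  enegep : seq lit
}.

Record elp := ELP { eE : {set lit}; eR : seq erule }.

Definition elp_wf (P : elp) : bool :=
  all (fun r => all (fun l => l \in eE P) (eep r ++ enegep r)) (eR P).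

Definition compatible (E Phi : {set lit}) (I : {set interp}) : bool :=
  [&& I != set0,
      [forall l in Phi, [exists J in I, ~~ lsat J l]] &
      [forall l in E :\: Phi, [forall J in I, lsat J l]]].

Definition ep_blit (Phi : {set lit}) (l : lit) : blit :=
  if l \in Phi then BTop else BNot (lit_blit l).

Definition ep_reduct (P : elp) (Phi : {set lit}) : program :=
  [seq Rule (ehead r)
       (map lit_blit (elits r) ++ map (ep_blit Phi) (eep r)
          ++ map (fun l => BNot (ep_blit Phi l)) (enegep r)) | r <- eR P].

Definition realizable_in (E Phi : {set lit}) (I : {set interp}) : bool :=
  [exists J : {set interp}, (J \subset I) && compatible E Phi J].

Definition realizable (P : elp) (Phi : {set lit}) : bool :=
  realizable_in (eE P) Phi (mods (ep_reduct P Phi)).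

Definition SEfun (P : elp) (Phi : {set lit}) : {set interp * interp} :=
  if realizable P Phi then se_models (ep_reduct P Phi) else set0.

Definition candidate_world_view (P : elp) (Phi : {set lit}) (M : {set interp}) : Prop :=
  M = answer_sets (ep_reduct P Phi) /\ compatible (eE P) Phi M.

End Programs.

(** Every model [Y] of a plain program [Q] is also a model of the reduct
    [Q^Y], so [(Y, Y)] is an SE-model of [Q] exactly when [Y] is a model, and
    the answer sets of [Q] are the [Y] with [(Y, Y)] an SE-model and no
    SE-model [(X, Y)] with [X] a proper subset of [Y].  Applied to [Q = Pi^Phi]
    this settles realizable guesses.  For a non-realizable guess the
    SE-function is empty, so the right-hand side forces [M] to be empty,
    which no compatible set is; and a candidate world view is itself a
    compatible subset of the models of [Pi^Phi], so it cannot exist either. *)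
From mathcomp Require Import all_boot.

Section PlainPrograms.
Variable A : finType.
Implicit Types (Q : program A) (r : rule A) (Y : {set A}).

Lemma bsat_body_reduct Y (bs : seq (blit A)) :
  all (fun b => is_neg b ==> bsat Y b) bs ->
  all (bsat Y) [seq b <- bs | if b is BAtom _ then true else false] ->
  all (bsat Y) bs.
Proof.
elim: bs => [|[a|b|] bs IH] //=.
- by move=> negY /andP[-> posY]; exact: IH.
- by move=> /andP[-> negY]; exact: IH.
Qed.

Lemma sat_rule_reduct Y r :
  all (fun b => is_neg b ==> bsat Y b) (rbody r) ->
  sat_rule Y r -> sat_rule Y (Rule (rhead r) (bpos r)).
Proof.
move=> negY /implyP satY; apply/implyP => posY.
by apply: satY; exact: bsat_body_reduct.
Qed.

Lemma mods_gl_reduct Q Y : Y \in mods Q -> Y \in mods (gl_reduct Q Y).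
Proof.
rewrite !inE /gl_reduct all_map all_filter.
by apply: sub_all => r satr; apply/implyP => negY; exact: sat_rule_reduct.
Qed.

Lemma se_models_refl Q Y : ((Y, Y) \in se_models Q) = (Y \in mods Q).
Proof.
rewrite inE /= subxx /=.
by apply/andP/idP => [[]|modY] //; split; last exact: mods_gl_reduct.
Qed.

Lemma answer_setsE_se Q :
  answer_sets Q = [set Y : {set A} | ((Y, Y) \in se_models Q) &&
          ~~ [exists X : {set A}, (X \proper Y) && ((X, Y) \in se_models Q)]].
Proof.
apply/setP => Y; rewrite [in RHS]in_set se_models_refl inE.
case modY: (Y \in mods Q) => //=; congr (~~ _).
apply/existsP/existsP => -[X /andP[ltXY modX]]; exists X; rewrite ltXY /=.
  by rewrite inE /= proper_sub // modY modX.
by move: modX; rewrite inE /= => /and3P[].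
Qed.

End PlainPrograms.

Lemma compatible_neq0 {A : finType} {E Phi : {set lit A}} {I : {set {set A}}} :
  compatible E Phi I -> I != set0.
Proof. by case/and3P. Qed.

Lemma candidate_world_view_realizable {A : finType} {P : elp A}
    {Phi : {set lit A}} {M : {set {set A}}} :
  candidate_world_view P Phi M -> realizable P Phi.
Proof.
move=> [-> compM]; apply/existsP; exists (answer_sets (ep_reduct P Phi)).
by rewrite compM andbT; apply/subsetP => Y; rewrite inE => /andP[].
Qed.

Theorem lemma1 (A : finType) (P : elp A) (M : {set {set A}}) (Phi : {set lit A}) :
  elp_wf P -> Phi \subset eE P ->
  (candidate_world_view P Phi M <->
   (M = [set Y : {set A} | ((Y, Y) \in SEfun P Phi) &&
          ~~ [exists X : {set A}, (X \proper Y) && ((X, Y) \in SEfun P Phi)]]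
    /\ compatible (eE P) Phi M)).
Proof.
move=> _ _; rewrite /SEfun.
case realPhi: (realizable P Phi); first by rewrite -answer_setsE_se.
split=> [cwvM | [defM compM]].
  by rewrite (candidate_world_view_realizable cwvM) in realPhi.
have M0 : M = set0 by rewrite defM; apply/setP => Y; rewrite !inE.
by move: (compatible_neq0 compM); rewrite M0 eqxx.
Qed.
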